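(* Let $f=u+iv$ be polar-analytic on an open neighbourhood $\mathcal D\subset\mathbb H$ of $(r_0,\theta_0)$, with $(D_{\rm pol}f)(r_0,\theta_0)\neq0$. For $j=1,2$ let $\gamma_j$ be a $C^1$ curve in $\mathcal D$ with $\gamma_j(0)=(r_0,\theta_0)$ and tangent vector $\gamma_j'(0)$ a positive multiple of $(\cos\phi_j,\sin\phi_j)$, where $\phi_j\in\,]-\pi/2,\pi/2]$; let $\alpha\in[0,\pi]$ be the angle between these tangent vectors, so $\cos\alpha=\cos(\phi_2-\phi_1)$. Then the curves $f\circ\gamma_1$ and $f\circ\gamma_2$ (viewed in $\mathbb R^2\cong\mathbb C$) have nonzero tangent vectors at $t=0$, and the angle $\beta\in[0,\pi]$ between them satisfies $$\cos\beta=\frac{c_1c_2+r_0^2s_1s_2}{\sqrt{c_1^2+r_0^2s_1^2}\,\sqrt{c_2^2+r_0^2s_2^2}},\qquad c_j=\cos\phi_j,\ s_j=\sin\phi_j.$$ In particular $\beta$ depends only on $r_0,\phi_1,\phi_2$ and not on $f$ or $\theta_0$, and $\beta=\alpha$ when $r_0=1$.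
   Context: $\mathbb H:=\{(r,\theta): r>0,\ \theta\in\mathbb R\}$. A function $f:\mathcal D\to\mathbb C$ on an open set $\mathcal D\subset\mathbb H$ is called polar-analytic on $\mathcal D$ if for every $(r_0,\theta_0)\in\mathcal D$ the limit $$(D_{\rm pol}f)(r_0,\theta_0):=\lim_{(r,\theta)\to(r_0,\theta_0)}\frac{f(r,\theta)-f(r_0,\theta_0)}{re^{i\theta}-r_0e^{i\theta_0}}$$ exists (with $(r,\theta)\in\mathcal D$, $re^{i\theta}\neq r_0e^{i\theta_0}$), independently of how $(r,\theta)$ approaches $(r_0,\theta_0)$ within $\mathcal D$. The angle between two nonzero vectors $x,y\in\mathbb R^2$ is the unique $\beta\in[0,\pi]$ with $\cos\beta=\langle x,y\rangle/(\|x\|_2\|y\|_2)$. *)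

From Stdlib Require Import Reals Lra.
Open Scope R_scope.

(* points of H are pairs (r, theta); complex values are pairs (re, im) *)
Definition cnorm (z : R * R) : R := sqrt (fst z ^ 2 + snd z ^ 2).
Definition csub (z w : R * R) : R * R := (fst z - fst w, snd z - snd w).
Definition cdiv (z w : R * R) : R * R :=
  let d := fst w ^ 2 + snd w ^ 2 in
  ((fst z * fst w + snd z * snd w) / d, (snd z * fst w - fst z * snd w) / d).
Definition polar_pt (r theta : R) : R * R := (r * cos theta, r * sin theta).

Definition dist2 (p q : R * R) : R := cnorm (csub p q).

Definition open_in_H (D : R -> R -> Prop) : Prop :=
  (forall r th, D r th -> 0 < r) /\
  (forall r th, D r th -> exists eps, 0 < eps /\
     forall r' th', dist2 (r', th') (r, th) < eps -> D r' th').

Definition has_Dpol (D : R -> R -> Prop) (f : R -> R -> R * R)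
    (r0 th0 : R) (L : R * R) : Prop :=
  forall eps, 0 < eps -> exists delta, 0 < delta /\
    forall r th, D r th -> dist2 (r, th) (r0, th0) < delta ->
      polar_pt r th <> polar_pt r0 th0 ->
      cnorm (csub (cdiv (csub (f r th) (f r0 th0))
                        (csub (polar_pt r th) (polar_pt r0 th0))) L) < eps.

Definition polar_analytic (D : R -> R -> Prop) (f : R -> R -> R * R) : Prop :=
  forall r0 th0, D r0 th0 -> exists L, has_Dpol D f r0 th0 L.

Definition C1_curve_in (D : R -> R -> Prop) (a : R) (g1 g2 : R -> R) : Prop :=
  0 < a /\
  exists g1' g2' : R -> R,
    forall t, -a < t < a ->
      D (g1 t) (g2 t) /\
      derivable_pt_lim g1 t (g1' t) /\ derivable_pt_lim g2 t (g2' t) /\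
      continuity_pt g1' t /\ continuity_pt g2' t.

Definition dot2 (x y : R * R) : R := fst x * fst y + snd x * snd y.

Definition vec_angle (x y : R * R) : R := acos (dot2 x y / (cnorm x * cnorm y)).

From Stdlib Require Import Reals Lra Psatz ClassicalEpsilon.
Open Scope R_scope.

(* With P (r, th) = r e^{i th}, polar differentiability at (r0, th0) says that along a curve
   gamma through (r0, th0), f (gamma t) - f (gamma 0) = (L + o(1)) (P (gamma t) - P (gamma 0)),
   where P is locally injective near (r0, th0) so the factor can be patched to L wherever the
   P-increment vanishes.  Hence (f o gamma)'(0) = L e^{i th0} (r'(0) + i r0 th'(0)).  Multiplying
   by the nonzero number L e^{i th0} preserves angles, so beta is the angle between
   (cos phi1, r0 sin phi1) and (cos phi2, r0 sin phi2). *)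

Definition cmul (z w : R * R) : R * R :=
  (fst z * fst w - snd z * snd w, fst z * snd w + snd z * fst w).

Lemma cnorm_sqr z : cnorm z ^ 2 = fst z ^ 2 + snd z ^ 2.
Proof. unfold cnorm; rewrite pow2_sqrt; [reflexivity | nra]. Qed.

Lemma csub_diag z : csub z z = (0, 0).
Proof. unfold csub; rewrite !Rminus_diag; reflexivity. Qed.

Lemma cnorm_0 : cnorm (0, 0) = 0.
Proof. unfold cnorm; cbn [fst snd]; replace (0 ^ 2 + 0 ^ 2) with 0 by ring; apply sqrt_0. Qed.

Lemma cnorm_ge0 z : 0 <= cnorm z.
Proof. apply sqrt_pos. Qed.

Lemma cnorm_gt0 z : 0 < cnorm z <-> z <> (0, 0).
Proof.
  split.
  - intros Hpos ->; rewrite cnorm_0 in Hpos; lra.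
  - destruct z as [x y]; intro Hneq; apply sqrt_lt_R0; cbn [fst snd].
    destruct (Req_dec x 0) as [->|Hx]; [destruct (Req_dec y 0) as [->|Hy]|]; [congruence|nra|nra].
Qed.

Lemma Rabs_fst_le_cnorm z : Rabs (fst z) <= cnorm z.
Proof.
  rewrite <- (sqrt_pow2 (Rabs (fst z))) by apply Rabs_pos.
  apply sqrt_le_1_alt; rewrite pow2_abs; pose proof (pow2_ge_0 (snd z)); lra.
Qed.

Lemma Rabs_snd_le_cnorm z : Rabs (snd z) <= cnorm z.
Proof.
  rewrite <- (sqrt_pow2 (Rabs (snd z))) by apply Rabs_pos.
  apply sqrt_le_1_alt; rewrite pow2_abs; pose proof (pow2_ge_0 (fst z)); lra.
Qed.

Lemma cnorm_le_Rabs_add x y : cnorm (x, y) <= Rabs x + Rabs y.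
Proof.
  pose proof (Rabs_pos x); pose proof (Rabs_pos y).
  rewrite <- (sqrt_pow2 (Rabs x + Rabs y)) by lra.
  apply sqrt_le_1_alt; cbn [fst snd]; rewrite <- (pow2_abs x), <- (pow2_abs y); nra.
Qed.

Lemma cnorm_cmul z w : cnorm (cmul z w) = cnorm z * cnorm w.
Proof. unfold cnorm, cmul; simpl; rewrite <- sqrt_mult by nra; f_equal; ring. Qed.

Lemma cmul_neq0 z w : z <> (0, 0) -> w <> (0, 0) -> cmul z w <> (0, 0).
Proof. rewrite <- !cnorm_gt0, cnorm_cmul; apply Rmult_lt_0_compat. Qed.

Lemma cmul_cdiv z w : w <> (0, 0) -> cmul (cdiv z w) w = z.
Proof.
  intro Hw; apply cnorm_gt0 in Hw; pose proof (cnorm_sqr w) as Ew.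
  destruct z as [x y], w as [u v]; unfold cmul, cdiv; cbn [fst snd] in *.
  assert (Hd : u ^ 2 + v ^ 2 <> 0) by nra.
  f_equal; field; exact Hd.
Qed.

Lemma dot2_cmul m z w : dot2 (cmul m z) (cmul m w) = cnorm m ^ 2 * dot2 z w.
Proof. rewrite cnorm_sqr; unfold dot2, cmul; simpl; ring. Qed.

Lemma dot2_cauchy_schwarz z w :
  - (cnorm z * cnorm w) <= dot2 z w <= cnorm z * cnorm w.
Proof.
  assert (Hsq : dot2 z w ^ 2 <= (cnorm z * cnorm w) ^ 2).
  { rewrite Rpow_mult_distr, !cnorm_sqr; unfold dot2.
    pose proof (pow2_ge_0 (fst z * snd w - snd z * fst w)); nra. }
  pose proof (Rmult_le_pos _ _ (cnorm_ge0 z) (cnorm_ge0 w)).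
  split; nra.
Qed.

Lemma cos_vec_angle z w : z <> (0, 0) -> w <> (0, 0) ->
  cos (vec_angle z w) = dot2 z w / (cnorm z * cnorm w).
Proof.
  rewrite <- !cnorm_gt0; intros Hz Hw; unfold vec_angle.
  pose proof (dot2_cauchy_schwarz z w) as Hcs.
  assert (Hn : 0 < cnorm z * cnorm w) by nra.
  rewrite cos_acos; [reflexivity|]; split.
  - apply Rmult_le_reg_r with (1 := Hn); unfold Rdiv; rewrite Rmult_assoc, Rinv_l; lra.
  - apply Rmult_le_reg_r with (1 := Hn); unfold Rdiv; rewrite Rmult_assoc, Rinv_l; lra.
Qed.

Lemma vec_angle_cmul m z w : m <> (0, 0) ->
  vec_angle (cmul m z) (cmul m w) = vec_angle z w.
Proof.
  rewrite <- cnorm_gt0; intro Hm; unfold vec_angle.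
  rewrite dot2_cmul, !cnorm_cmul.
  destruct (Req_dec (cnorm z * cnorm w) 0) as [E|E].
  - replace (cnorm m * cnorm z * (cnorm m * cnorm w)) with (cnorm m ^ 2 * (cnorm z * cnorm w)) by ring.
    rewrite E, Rmult_0_r, !Rdiv_0_r; reflexivity.
  - assert (cnorm z <> 0) by (intro Z; apply E; rewrite Z; ring).
    assert (cnorm w <> 0) by (intro Z; apply E; rewrite Z; ring).
    f_equal; field; repeat split; lra.
Qed.

Lemma derivable_pt_lim_continuity_pt f x l :
  derivable_pt_lim f x l -> continuity_pt f x.
Proof. intro Hf; apply (derivable_continuous_pt f x (exist _ l Hf)). Qed.

Lemma derivable_pt_lim_mult_vanishing (c u : R -> R) x du :
  continuity_pt c x -> u x = 0 -> derivable_pt_lim u x du ->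
  derivable_pt_lim (fun h => c h * u h) x (c x * du).
Proof.
  intros Hc Hu Hdu.
  apply (derivable_pt_lim_D_in _ (fun _ => c x * du)).
  apply (derivable_pt_lim_D_in u (fun _ => du)) in Hdu.
  intros eps Heps.
  destruct (limit_mul _ _ _ _ _ _ Hc Hdu eps Heps) as [alp [Halp Hlim]].
  exists alp; split; [exact Halp|]; intros h Hh.
  replace ((c h * u h - c x * u x) / (h - x)) with (c h * ((u h - u x) / (h - x)))
    by (rewrite Hu; unfold Rdiv; ring).
  exact (Hlim h Hh).
Qed.

Lemma derivable_pt_lim_cmul_vanishing (c u : R -> R * R) x du :
  continuity_pt (fun h => fst (c h)) x -> continuity_pt (fun h => snd (c h)) x ->
  u x = (0, 0) ->
  derivable_pt_lim (fun h => fst (u h)) x (fst du) ->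
  derivable_pt_lim (fun h => snd (u h)) x (snd du) ->
  derivable_pt_lim (fun h => fst (cmul (c h) (u h))) x (fst (cmul (c x) du)) /\
  derivable_pt_lim (fun h => snd (cmul (c h) (u h))) x (snd (cmul (c x) du)).
Proof.
  intros Hc1 Hc2 Hu Hu1 Hu2; unfold cmul; cbn [fst snd].
  split; [apply derivable_pt_lim_minus | apply derivable_pt_lim_plus];
    apply derivable_pt_lim_mult_vanishing; auto; rewrite Hu; reflexivity.
Qed.

Lemma polar_pt_inj r th r0 th0 : 0 < r -> 0 < r0 -> dist2 (r, th) (r0, th0) < PI ->
  polar_pt r th = polar_pt r0 th0 -> r = r0 /\ th = th0.
Proof.
  intros Hr Hr0 Hdist E; unfold polar_pt in E; injection E as Ec Es.
  assert (Hrr : r = r0).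
  { pose proof (sin2_cos2 th); pose proof (sin2_cos2 th0); unfold Rsqr in *.
    assert (Hsq : r * r = r0 * r0).
    { transitivity ((r * cos th) ^ 2 + (r * sin th) ^ 2); [nra|].
      rewrite Ec, Es; nra. }
    nra. }
  subst r0; split; [reflexivity|].
  assert (Ec' : cos th = cos th0) by (apply (Rmult_eq_reg_l r); lra).
  assert (Es' : sin th = sin th0) by (apply (Rmult_eq_reg_l r); lra).
  assert (Hsin : sin (th - th0) = 0) by (rewrite sin_minus, Ec', Es'; ring).
  pose proof (Rabs_snd_le_cnorm (csub (r, th) (r, th0))) as Hth.
  unfold dist2 in Hdist; cbn [csub fst snd] in Hth.
  assert (Habs : Rabs (th - th0) < PI) by lra.
  apply Rabs_def2 in Habs.
  destruct (Rtotal_order th th0) as [Hlt|[Heq|Hgt]]; [exfalso | exact Heq | exfalso].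
  - assert (Hpos : 0 < sin (th0 - th)) by (apply sin_gt_0; lra).
    rewrite <- Ropp_minus_distr, sin_neg in Hpos; lra.
  - assert (Hpos : 0 < sin (th - th0)) by (apply sin_gt_0; lra); lra.
Qed.

Lemma derivable_pt_lim_polar_pt (g1 g2 : R -> R) x d1 d2 :
  derivable_pt_lim g1 x d1 -> derivable_pt_lim g2 x d2 ->
  let p := cmul (cos (g2 x), sin (g2 x)) (d1, g1 x * d2) in
  derivable_pt_lim (fun t => fst (polar_pt (g1 t) (g2 t))) x (fst p) /\
  derivable_pt_lim (fun t => snd (polar_pt (g1 t) (g2 t))) x (snd p).
Proof.
  intros Hd1 Hd2 p; unfold p, polar_pt, cmul; cbn [fst snd]; split.
  - replace (cos (g2 x) * d1 - sin (g2 x) * (g1 x * d2))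
      with (d1 * cos (g2 x) + g1 x * (- sin (g2 x) * d2)) by ring.
    exact (derivable_pt_lim_mult g1 (fun t => cos (g2 t)) x _ _ Hd1
             (derivable_pt_lim_comp g2 cos x _ _ Hd2 (derivable_pt_lim_cos _))).
  - replace (cos (g2 x) * (g1 x * d2) + sin (g2 x) * d1)
      with (d1 * sin (g2 x) + g1 x * (cos (g2 x) * d2)) by ring.
    exact (derivable_pt_lim_mult g1 (fun t => sin (g2 t)) x _ _ Hd1
             (derivable_pt_lim_comp g2 sin x _ _ Hd2 (derivable_pt_lim_sin _))).
Qed.

Section PolarChainRule.

Variables (D : R -> R -> Prop) (f : R -> R -> R * R) (r0 th0 : R) (L : R * R).
Variables (a d1 d2 : R) (g1 g2 : R -> R).
Hypothesis D_pos : forall r th, D r th -> 0 < r.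
Hypothesis f_Dpol : has_Dpol D f r0 th0 L.
Hypothesis a_gt0 : 0 < a.
Hypothesis g_in_D : forall t, - a < t < a -> D (g1 t) (g2 t).
Hypotheses (g1_0 : g1 0 = r0) (g2_0 : g2 0 = th0).
Hypotheses (g1_d : derivable_pt_lim g1 0 d1) (g2_d : derivable_pt_lim g2 0 d2).

Let P t := polar_pt (g1 t) (g2 t).
Let F t := f (g1 t) (g2 t).

Lemma r0_gt0 : 0 < r0.
Proof. rewrite <- g1_0; apply (D_pos _ (g2 0)), g_in_D; lra. Qed.

Lemma curve_near_base eps : 0 < eps -> exists alp, 0 < alp /\
  forall h, Rabs h < alp -> D (g1 h) (g2 h) /\ dist2 (g1 h, g2 h) (r0, th0) < eps.
Proof.
  intro Heps.
  destruct (derivable_pt_lim_continuity_pt _ _ _ g1_d (eps / 2)) as [b1 [Hb1 C1]]; [lra|].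
  destruct (derivable_pt_lim_continuity_pt _ _ _ g2_d (eps / 2)) as [b2 [Hb2 C2]]; [lra|].
  exists (Rmin a (Rmin b1 b2)); split; [repeat apply Rmin_pos; lra|].
  intros h Hh; pose proof (Rmin_l a (Rmin b1 b2)); pose proof (Rmin_r a (Rmin b1 b2));
    pose proof (Rmin_l b1 b2); pose proof (Rmin_r b1 b2).
  split; [apply g_in_D; apply Rabs_def2 in Hh; lra|].
  destruct (Req_dec h 0) as [->|Hh0].
  - rewrite g1_0, g2_0; unfold dist2; rewrite csub_diag, cnorm_0; lra.
  - assert (Hx : D_x no_cond 0 h /\ Rdist h 0 < b1) by
      (split; [split; [exact I | auto] | unfold Rdist; rewrite Rminus_0_r; lra]).
    assert (Hy : D_x no_cond 0 h /\ Rdist h 0 < b2) by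
      (split; [split; [exact I | auto] | unfold Rdist; rewrite Rminus_0_r; lra]).
    specialize (C1 h Hx); specialize (C2 h Hy); cbn in C1, C2; unfold Rdist in C1, C2.
    rewrite g1_0 in C1; rewrite g2_0 in C2.
    unfold dist2, csub; cbn [fst snd].
    eapply Rle_lt_trans; [apply cnorm_le_Rabs_add | lra].
Qed.

(* Patched with the value [L] where the increment of [P] vanishes, to make it continuous at 0. *)
Definition polar_quotient h : R * R :=
  if excluded_middle_informative (P h = P 0) then L
  else cdiv (csub (F h) (F 0)) (csub (P h) (P 0)).

Lemma polar_quotient_0 : polar_quotient 0 = L.
Proof.
  unfold polar_quotient; destruct (excluded_middle_informative _) as [_|Hne];
    [reflexivity | contradiction].
Qed.

Lemma polar_quotient_near_L eps : 0 < eps -> exists alp, 0 < alp /\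
  forall h, Rabs h < alp -> cnorm (csub (polar_quotient h) L) < eps.
Proof.
  intro Heps; destruct (f_Dpol eps Heps) as [del [Hdel HL]].
  destruct (curve_near_base del Hdel) as [alp [Halp Hnear]].
  exists alp; split; [exact Halp|]; intros h Hh; destruct (Hnear h Hh) as [HD Hdist].
  unfold polar_quotient; destruct (excluded_middle_informative _) as [_|Hne].
  - rewrite csub_diag, cnorm_0; exact Heps.
  - unfold P, F in *; rewrite g1_0, g2_0 in *; exact (HL _ _ HD Hdist Hne).
Qed.

Lemma polar_quotient_continuous :
  continuity_pt (fun h => fst (polar_quotient h)) 0 /\
  continuity_pt (fun h => snd (polar_quotient h)) 0.
Proof.
  split; intros eps Heps; destruct (polar_quotient_near_L eps Heps) as [alp [Halp Hq]];
    exists alp; split; try exact Halp; intros h [_ Hh]; simpl in Hh |- *; unfold Rdist in *;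
    rewrite Rminus_0_r in Hh; specialize (Hq h Hh);
    rewrite polar_quotient_0; refine (Rle_lt_trans _ _ _ _ Hq).
  - apply (Rabs_fst_le_cnorm (csub _ _)).
  - apply (Rabs_snd_le_cnorm (csub _ _)).
Qed.

Lemma polar_increment : exists alp, 0 < alp /\ forall h, Rabs h < alp ->
  csub (F h) (F 0) = cmul (polar_quotient h) (csub (P h) (P 0)).
Proof.
  destruct (curve_near_base PI PI_RGT_0) as [alp [Halp Hnear]].
  exists alp; split; [exact Halp|]; intros h Hh; destruct (Hnear h Hh) as [HD Hdist].
  unfold polar_quotient; destruct (excluded_middle_informative _) as [HP|Hne].
  - unfold P in HP; rewrite g1_0, g2_0 in HP.
    destruct (polar_pt_inj _ _ _ _ (D_pos _ _ HD) r0_gt0 Hdist HP) as [E1 E2].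
    unfold F, P; rewrite E1, E2, g1_0, g2_0.
    unfold csub, cmul; cbn [fst snd]; rewrite !Rminus_diag; f_equal; ring.
  - rewrite cmul_cdiv; [reflexivity|].
    intro Z; apply Hne; destruct (P h) as [x y], (P 0) as [x0 y0].
    unfold csub in Z; cbn [fst snd] in Z; injection Z as Zx Zy; f_equal; lra.
Qed.

Lemma derivable_pt_lim_polar_chain :
  let w := cmul L (cmul (cos th0, sin th0) (d1, r0 * d2)) in
  derivable_pt_lim (fun t => fst (f (g1 t) (g2 t))) 0 (fst w) /\
  derivable_pt_lim (fun t => snd (f (g1 t) (g2 t))) 0 (snd w).
Proof.
  intro w.
  destruct (derivable_pt_lim_polar_pt g1 g2 0 d1 d2 g1_d g2_d) as [HP1 HP2].
  rewrite g1_0, g2_0 in HP1, HP2.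
  set (p := cmul (cos th0, sin th0) (d1, r0 * d2)) in HP1, HP2, w.
  destruct polar_quotient_continuous as [Hq1 Hq2].
  destruct (derivable_pt_lim_cmul_vanishing polar_quotient (fun h => csub (P h) (P 0)) 0 p
    Hq1 Hq2) as [Hw1 Hw2].
  - apply csub_diag.
  - rewrite <- (Rminus_0_r (fst p)).
    exact (derivable_pt_lim_minus _ (fct_cte (fst (P 0))) 0 _ _ HP1 (derivable_pt_lim_const _ 0)).
  - rewrite <- (Rminus_0_r (snd p)).
    exact (derivable_pt_lim_minus _ (fct_cte (snd (P 0))) 0 _ _ HP2 (derivable_pt_lim_const _ 0)).
  - rewrite polar_quotient_0 in Hw1, Hw2; fold w in Hw1, Hw2.
    destruct polar_increment as [alp [Halp Hinc]].
    split.
    + apply (derivable_pt_lim_locally_ext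
        (fun h => fst (F 0) + fst (cmul (polar_quotient h) (csub (P h) (P 0)))) _ 0 (- alp) alp);
        [lra | |].
      * intros h Hh; rewrite <- Hinc by (apply Rabs_def1; lra); unfold F, csub; cbn [fst]; ring.
      * rewrite <- (Rplus_0_l (fst w)).
        exact (derivable_pt_lim_plus _ _ 0 _ _ (derivable_pt_lim_const _ 0) Hw1).
    + apply (derivable_pt_lim_locally_ext
        (fun h => snd (F 0) + snd (cmul (polar_quotient h) (csub (P h) (P 0)))) _ 0 (- alp) alp);
        [lra | |].
      * intros h Hh; rewrite <- Hinc by (apply Rabs_def1; lra); unfold F, csub; cbn [snd]; ring.
      * rewrite <- (Rplus_0_l (snd w)).
        exact (derivable_pt_lim_plus _ _ 0 _ _ (derivable_pt_lim_const _ 0) Hw2).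
Qed.

End PolarChainRule.

Lemma cnorm_cos_sin th : cnorm (cos th, sin th) = 1.
Proof.
  unfold cnorm; cbn [fst snd]; rewrite <- sqrt_1; f_equal.
  pose proof (sin2_cos2 th); unfold Rsqr in *; lra.
Qed.

Lemma cnorm_tangent_image r0 lam phi : 0 <= lam ->
  cnorm (lam * cos phi, r0 * (lam * sin phi)) =
  lam * sqrt (cos phi ^ 2 + r0 ^ 2 * sin phi ^ 2).
Proof.
  intro Hlam; unfold cnorm; cbn [fst snd].
  replace ((lam * cos phi) ^ 2 + (r0 * (lam * sin phi)) ^ 2)
    with (lam ^ 2 * (cos phi ^ 2 + r0 ^ 2 * sin phi ^ 2)) by ring.
  rewrite sqrt_mult, sqrt_pow2 by (try apply pow2_ge_0; nra); reflexivity.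
Qed.

Lemma sqrt_cos2_add_sin2_gt0 r0 phi : r0 <> 0 ->
  0 < sqrt (cos phi ^ 2 + r0 ^ 2 * sin phi ^ 2).
Proof.
  intro Hr0; apply sqrt_lt_R0; pose proof (sin2_cos2 phi); unfold Rsqr in *.
  pose proof (pow2_ge_0 (cos phi)); pose proof (pow2_ge_0 (sin phi)).
  assert (0 < r0 ^ 2) by (simpl; rewrite Rmult_1_r; apply Rsqr_pos_lt, Hr0).
  destruct (Req_dec (cos phi) 0) as [E|E]; [rewrite E in *|]; nra.
Qed.

Theorem proposition4
  (D : R -> R -> Prop) (f : R -> R -> R * R) (r0 th0 : R) (L : R * R)
  (a1 a2 : R) (g11 g12 g21 g22 : R -> R)
  (lam1 lam2 phi1 phi2 : R) :
  open_in_H D -> D r0 th0 ->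
  polar_analytic D f ->
  has_Dpol D f r0 th0 L -> L <> (0, 0) ->
  C1_curve_in D a1 g11 g12 -> C1_curve_in D a2 g21 g22 ->
  g11 0 = r0 -> g12 0 = th0 -> g21 0 = r0 -> g22 0 = th0 ->
  0 < lam1 -> 0 < lam2 ->
  - (PI / 2) < phi1 <= PI / 2 -> - (PI / 2) < phi2 <= PI / 2 ->
  derivable_pt_lim g11 0 (lam1 * cos phi1) ->
  derivable_pt_lim g12 0 (lam1 * sin phi1) ->
  derivable_pt_lim g21 0 (lam2 * cos phi2) ->
  derivable_pt_lim g22 0 (lam2 * sin phi2) ->
  exists w1 w2 : R * R,
    derivable_pt_lim (fun t => fst (f (g11 t) (g12 t))) 0 (fst w1) /\
    derivable_pt_lim (fun t => snd (f (g11 t) (g12 t))) 0 (snd w1) /\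
    derivable_pt_lim (fun t => fst (f (g21 t) (g22 t))) 0 (fst w2) /\
    derivable_pt_lim (fun t => snd (f (g21 t) (g22 t))) 0 (snd w2) /\
    w1 <> (0, 0) /\ w2 <> (0, 0) /\
    cos (vec_angle w1 w2) =
      (cos phi1 * cos phi2 + r0 ^ 2 * sin phi1 * sin phi2) /
      (sqrt (cos phi1 ^ 2 + r0 ^ 2 * sin phi1 ^ 2) *
       sqrt (cos phi2 ^ 2 + r0 ^ 2 * sin phi2 ^ 2)) /\
    (r0 = 1 ->
     vec_angle w1 w2 =
       vec_angle (lam1 * cos phi1, lam1 * sin phi1)
                 (lam2 * cos phi2, lam2 * sin phi2)).
Proof.
  intros [D_pos _] _ _ HL HL0 [Ha1 [g11' [g12' Hc1]]] [Ha2 [g21' [g22' Hc2]]]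
    E11 E12 E21 E22 Hlam1 Hlam2 _ _ Hd11 Hd12 Hd21 Hd22.
  assert (In1 : forall t, - a1 < t < a1 -> D (g11 t) (g12 t)) by (intros t Ht; apply Hc1, Ht).
  assert (In2 : forall t, - a2 < t < a2 -> D (g21 t) (g22 t)) by (intros t Ht; apply Hc2, Ht).
  pose proof (r0_gt0 D r0 a1 g11 g12 D_pos Ha1 In1 E11) as Hr0.
  destruct (derivable_pt_lim_polar_chain D f r0 th0 L a1 _ _ g11 g12
    D_pos HL Ha1 In1 E11 E12 Hd11 Hd12) as [A1 A2].
  destruct (derivable_pt_lim_polar_chain D f r0 th0 L a2 _ _ g21 g22
    D_pos HL Ha2 In2 E21 E22 Hd21 Hd22) as [B1 B2].
  set (e := (cos th0, sin th0)) in *.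
  set (z1 := (lam1 * cos phi1, r0 * (lam1 * sin phi1))) in *.
  set (z2 := (lam2 * cos phi2, r0 * (lam2 * sin phi2))) in *.
  pose proof (sqrt_cos2_add_sin2_gt0 r0 phi1 ltac:(lra)) as S1.
  pose proof (sqrt_cos2_add_sin2_gt0 r0 phi2 ltac:(lra)) as S2.
  assert (He : e <> (0, 0)) by (apply cnorm_gt0; unfold e; rewrite cnorm_cos_sin; lra).
  assert (Hz1 : z1 <> (0, 0)) by (apply cnorm_gt0; unfold z1; rewrite cnorm_tangent_image; nra).
  assert (Hz2 : z2 <> (0, 0)) by (apply cnorm_gt0; unfold z2; rewrite cnorm_tangent_image; nra).
  exists (cmul L (cmul e z1)), (cmul L (cmul e z2)).
  rewrite !vec_angle_cmul by assumption.
  repeat split; try assumption; try (apply cmul_neq0; [|apply cmul_neq0]; assumption).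
  - rewrite cos_vec_angle by assumption; unfold z1, z2.
    rewrite !cnorm_tangent_image by lra; unfold dot2; cbn [fst snd].
    field; split; lra.
  - intros ->; unfold z1, z2; rewrite !Rmult_1_l; reflexivity.
Qed.
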